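(* Let $\mathcal G$ be an étale groupoid, $A$ a right $\mathcal G$-space and $B$ a left $\mathcal G$-space. If the $\mathcal G$-action on $A$ is proper and $B$ is Hausdorff, then the diagonal $\mathcal G$-action on $A\times_{s,\mathcal G^0,r}B$ defined by $g\cdot(a,b)=(a\cdot g^{-1},g\cdot b)$ (for $s(g)=s(a)=r(b)$) is proper.
   Context: An étale groupoid: topologies on arrow space $\mathcal G$ and object space $\mathcal G^0$ with $r,s$ local homeomorphisms and continuous multiplication and inversion. A right $\mathcal G$-space: space with continuous anchor $s$ and continuous action $(x,g)\mapsto xg$ defined when $s(x)=r(g)$, with $s(xg)=s(g)$, $(xg_1)g_2=x(g_1g_2)$, $x\,s(x)=x$; left spaces analogously with anchor $r$. A continuous map $f$ is proper if $f\times\mathrm{id}_Z$ is closed for every topological space $Z$. A right action on $A$ is proper if $A\times_{s,\mathcal G^0,r}\mathcal G\to A\times A$, $(a,g)\mapsto(ag,a)$, is proper; the diagonal (left) action on $W=A\times_{s,\mathcal G^0,r}B$, with anchor $(a,b)\mapsto s(a)=r(b)$, is proper if $\{(g,w)\in\mathcal G\times W: s(g)=\text{anchor}(w)\}\to W\times W$, $(g,w)\mapsto(g\cdot w,w)$, is proper. *)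

From HB Require Import structures.
From mathcomp Require Import all_boot all_order.
From mathcomp Require Import all_classical all_reals.
From mathcomp Require Import topology.
Set Implicit Arguments. Unset Strict Implicit. Unset Printing Implicit Defensive.
Local Open Scope classical_set_scope.

Definition rel_closed {X : topologicalType} (D C : set X) : Prop :=
  exists K : set X, closed K /\ C = D `&` K.

Definition proper_on {X Y : topologicalType} (D : set X) (E : set Y)
    (f : X -> Y) : Prop :=
  {within D, continuous f} /\ f @` D `<=` E /\
  forall (Z : topologicalType) (C : set (X * Z)),
    rel_closed (D `*` setT) C ->
    rel_closed (E `*` setT) ((fun p : X * Z => (f p.1, p.2)) @` C).

Definition local_homeo {X Y : topologicalType} (f : X -> Y) : Prop :=
  forall x : X, exists U : set X,
    [/\ open U /\ U x, open (f @` U), {in U &, injective f},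
        {within U, continuous f} &
        forall V : set X, open V -> V `<=` U -> open (f @` V)].

(* Étale groupoid with arrow space G, object space G0, range r, source s,
   multiplication mul (meaningful when s g = r h), inverse inv and units u. *)
Definition etale_groupoid {G G0 : topologicalType} (r s : G -> G0)
    (mul : G -> G -> G) (inv : G -> G) (u : G0 -> G) : Prop :=
  [/\ (forall x, r (u x) = x /\ s (u x) = x) /\
      (forall g h, s g = r h -> r (mul g h) = r g /\ s (mul g h) = s h) /\
      (forall g h k, s g = r h -> s h = r k -> mul (mul g h) k = mul g (mul h k)),
      (forall g, mul (u (r g)) g = g /\ mul g (u (s g)) = g) /\
      (forall g, [/\ r (inv g) = s g, s (inv g) = r g,
                    mul g (inv g) = u (r g) & mul (inv g) g = u (s g)]),
      local_homeo r /\ local_homeo s,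
      {within [set p : G * G | s p.1 = r p.2], continuous (fun p => mul p.1 p.2)}
    & continuous inv /\ continuous u].

Definition right_space {G G0 A : topologicalType} (r s : G -> G0)
    (mul : G -> G -> G) (u : G0 -> G) (sA : A -> G0) (act : A -> G -> A) : Prop :=
  [/\ continuous sA,
      {within [set p : A * G | sA p.1 = r p.2], continuous (fun p => act p.1 p.2)},
      (forall x g, sA x = r g -> sA (act x g) = s g),
      (forall x g1 g2, sA x = r g1 -> s g1 = r g2 ->
         act (act x g1) g2 = act x (mul g1 g2))
    & (forall x, act x (u (sA x)) = x)].

Definition left_space {G G0 B : topologicalType} (r s : G -> G0)
    (mul : G -> G -> G) (u : G0 -> G) (rB : B -> G0) (act : G -> B -> B) : Prop :=
  [/\ continuous rB,
      {within [set p : G * B | s p.1 = rB p.2], continuous (fun p => act p.1 p.2)},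
      (forall g y, s g = rB y -> rB (act g y) = r g),
      (forall g1 g2 y, s g2 = rB y -> s g1 = r g2 ->
         act g1 (act g2 y) = act (mul g1 g2) y)
    & (forall y, act (u (rB y)) y = y)].

Definition proper_right_action {G G0 A : topologicalType} (r : G -> G0)
    (sA : A -> G0) (act : A -> G -> A) : Prop :=
  proper_on [set p : A * G | sA p.1 = r p.2] setT
    (fun p : A * G => (act p.1 p.2, p.1)).

Definition fibre_prod {G0 A B : topologicalType} (sA : A -> G0) (rB : B -> G0)
  : set (A * B) := [set w | sA w.1 = rB w.2].

Definition diag_act {G A B : topologicalType} (inv : G -> G)
    (actA : A -> G -> A) (actB : G -> B -> B) (g : G) (w : A * B) : A * B :=
  (actA w.1 (inv g), actB g w.2).

Definition proper_diag_action {G G0 A B : topologicalType} (s : G -> G0)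
    (inv : G -> G) (sA : A -> G0) (rB : B -> G0)
    (actA : A -> G -> A) (actB : G -> B -> B) : Prop :=
  proper_on [set p : G * (A * B) | fibre_prod sA rB p.2 /\ s p.1 = sA p.2.1]
    (fibre_prod sA rB `*` fibre_prod sA rB)
    (fun p : G * (A * B) => (diag_act inv actA actB p.1 p.2, p.2)).

From mathcomp Require Import all_boot all_order all_classical all_reals topology.
Set Implicit Arguments. Unset Strict Implicit. Unset Printing Implicit Defensive.
Local Open Scope classical_set_scope.

(* Substituting a = a' h and recording c = h b turns a relatively closed set C
   of points ((h, (a, b)), z) into a set of points ((a', h), (b, (c, z))) over the
   domain of the right action of G on A, and the image of C under the
   diagonal action becomes, up to a permutation of coordinates, its image
   under the proper map (a', h) |-> (a' h, a').  That set need not be closed,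
   but its closure adds no point satisfying s h = r b: membership in C is a
   closed condition, and so is c = h b because B is Hausdorff. *)

Lemma continuous_fst {X Y : topologicalType} : continuous (@fst X Y).
Proof. by move=> [a b]; exact: cvg_fst. Qed.

Lemma continuous_snd {X Y : topologicalType} : continuous (@snd X Y).
Proof. by move=> [a b]; exact: cvg_snd. Qed.

Lemma continuous_pair {X Y Z : topologicalType} (f : X -> Y) (g : X -> Z) :
  continuous f -> continuous g -> continuous (fun x => (f x, g x)).
Proof. by move=> cf cg x; apply: cvg_pair; [exact: cf | exact: cg]. Qed.

Lemma continuous_comp_fun {X Y Z : topologicalType} (f : X -> Y) (g : Y -> Z) :
  continuous f -> continuous g -> continuous (g \o f).
Proof. by move=> cf cg x; apply: continuous_comp; [exact: cf | exact: cg]. Qed.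

Lemma continuous_fst_of {X Y Z : topologicalType} (f : X -> Y * Z) :
  continuous f -> continuous (fun x => (f x).1).
Proof. by move=> cf; apply: continuous_comp_fun cf continuous_fst. Qed.

Lemma continuous_snd_of {X Y Z : topologicalType} (f : X -> Y * Z) :
  continuous f -> continuous (fun x => (f x).2).
Proof. by move=> cf; apply: continuous_comp_fun cf continuous_snd. Qed.

Ltac projection_continuity :=
  repeat first [ exact: continuous_fst | exact: continuous_snd
               | apply: continuous_pair
               | apply: continuous_fst_of | apply: continuous_snd_of ].

Lemma within_continuous_pair {X Y Z : topologicalType} (P : set X)
    (f : X -> Y) (g : X -> Z) :
  {within P, continuous f} -> {within P, continuous g} ->
  {within P, continuous (fun x => (f x, g x))}.
Proof. by move=> cf cg x; apply: cvg_pair; [exact: cf | exact: cg]. Qed.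

Lemma within_continuous_compW {X Y Z : topologicalType} (P : set X)
    (Q : set Y) (f : X -> Y) (g : Y -> Z) :
  {within P, continuous f} -> f @` P `<=` Q -> {within Q, continuous g} ->
  {within P, continuous (g \o f)}.
Proof.
move=> /subspace_continuousP cf PQ /subspace_continuousP cg.
apply/subspace_continuousP => x Px V /(cg _ (PQ _ (imageP _ Px))) gV.
have fV : nbhs x [set y | P y -> Q (f y) -> V (g (f y))] := cf _ Px _ gV.
suff : nbhs x [set y | P y -> V (g (f y))] by [].
by apply: filterS fV => y gVy Py; apply: gVy => //; exact: PQ (imageP _ Py).
Qed.

Lemma rel_closedTT {X Y : topologicalType} (S : set (X * Y)) :
  rel_closed (setT `*` setT) S -> closed S.
Proof. by move=> [K [cK ->]]; rewrite setXTT setTI. Qed.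

Lemma closure_within_preimage_closed {X Y : topologicalType} (P S : set X)
    (f : X -> Y) (K : set Y) :
  S `<=` P -> {within P, continuous f} -> closed K -> f @` S `<=` K ->
  P `&` closure S `<=` f @^-1` K.
Proof.
move=> SP /subspace_continuousP cf cK SK x [Px clSx].
apply: cK => V /(cf _ Px) fV; have [y [Sy fVy]] := clSx _ fV.
by exists (f y); split; [exact: SK | exact: fVy (SP _ Sy)].
Qed.

Lemma hausdorff_closed_diagonal {T : topologicalType} :
  hausdorff_space T -> closed [set p : T * T | p.1 = p.2].
Proof.
move=> hT [p q] clpq; apply: hT => U V pU qV.
have [|[y _] [/= <- [Uy Vy]]] := clpq (U `*` V); first by exists (U, V).
by exists y.
Qed.

Lemma hausdorff_closure_within_eq {X Y : topologicalType} (P S : set X)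
    (f g : X -> Y) :
  hausdorff_space Y -> S `<=` P ->
  {within P, continuous f} -> {within P, continuous g} ->
  (forall x, S x -> f x = g x) -> P `&` closure S `<=` [set x | f x = g x].
Proof.
move=> hY SP cf cg Sfg.
apply: (closure_within_preimage_closed (f := fun x => (f x, g x)) SP _
  (hausdorff_closed_diagonal hY)); first exact: within_continuous_pair.
by move=> _ [y Sy <-]; exact: Sfg.
Qed.

Section DiagonalAction.
Variables (G G0 A B : topologicalType) (r s : G -> G0) (mul : G -> G -> G)
  (inv : G -> G) (u : G0 -> G) (sA : A -> G0) (actA : A -> G -> A)
  (rB : B -> G0) (actB : G -> B -> B).
Hypothesis groupoid : etale_groupoid r s mul inv u.
Hypothesis A_right : right_space r s mul u sA actA.
Hypothesis B_left : left_space r s mul u rB actB.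

Local Notation E := [set p : A * G | sA p.1 = r p.2].
Local Notation W := (fibre_prod sA rB).
Local Notation D := [set p : G * (A * B) | W p.2 /\ s p.1 = sA p.2.1].
Local Notation theta :=
  (fun p : G * (A * B) => (diag_act inv actA actB p.1 p.2, p.2)).

Let r_inv g : r (inv g) = s g.
Proof. by case: groupoid => _ [_ /(_ g) []]. Qed.

Let s_inv g : s (inv g) = r g.
Proof. by case: groupoid => _ [_ /(_ g) []]. Qed.

Let inv_continuous : continuous inv.
Proof. by have [_ _ _ _ []] := groupoid. Qed.

Lemma actA_cancel a g h :
  sA a = r g -> s g = r h -> mul g h = u (r g) -> actA (actA a g) h = a.
Proof.
have [_ _ _ actA_mul actA_unit] := A_right.
by move=> ag gh ghu; rewrite actA_mul // ghu -ag actA_unit.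
Qed.

Let actAVK a g : sA a = s g -> actA (actA a (inv g)) g = a.
Proof.
have [_ [_ /(_ g) [_ _ _ mulVg]] _ _ _] := groupoid.
by move=> ag; apply: actA_cancel; rewrite ?r_inv ?s_inv ?mulVg.
Qed.

Let actAKV a g : sA a = r g -> actA (actA a g) (inv g) = a.
Proof.
have [_ [_ /(_ g) [_ _ mulgV _]] _ _ _] := groupoid.
by move=> ag; apply: actA_cancel; rewrite ?r_inv ?s_inv ?mulgV.
Qed.

Let sA_actV a g : s g = sA a -> sA (actA a (inv g)) = r g.
Proof.
have [_ _ sA_act _ _] := A_right.
by move=> ga; rewrite sA_act ?s_inv // r_inv ga.
Qed.

Lemma diag_act_fibre_prod g a b :
  W (a, b) -> s g = sA a -> W (diag_act inv actA actB g (a, b)).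
Proof.
have [_ _ rB_act _ _] := B_left.
by move=> ab ga; rewrite /fibre_prod /= sA_actV // rB_act // ga.
Qed.

Lemma diag_act_continuous : {within D, continuous theta}.
Proof.
have [_ actA_cont _ _ _] := A_right; have [_ actB_cont _ _ _] := B_left.
apply: within_continuous_pair; last exact/continuous_subspaceT/continuous_snd.
apply: within_continuous_pair.
- apply: (within_continuous_compW (Q := E) (f := fun p => (p.2.1, inv p.1))
    (g := fun p => actA p.1 p.2)) => //.
    apply/continuous_subspaceT/continuous_pair; first by projection_continuity.
    exact: continuous_comp_fun continuous_fst inv_continuous.
  by move=> _ [[g [a b]] [_ /= ga] <-]; rewrite /= r_inv ga.
- apply: (within_continuous_compW (Q := [set p | s p.1 = rB p.2])
    (f := fun p => (p.1, p.2.2)) (g := fun p => actB p.1 p.2)) => //.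
    by apply: continuous_subspaceT; projection_continuity.
  by move=> _ [[g [a b]] [ab /= ga] <-]; rewrite /= ga.
Qed.

Variable Z : topologicalType.

Definition diag_unlift (q : (A * G) * (B * (B * Z))) : (G * (A * B)) * Z :=
  ((q.1.2, (actA q.1.1 q.1.2, q.2.1)), q.2.2.2).

Lemma diag_unlift_continuous : {within E `*` setT, continuous diag_unlift}.
Proof.
have [_ actA_cont _ _ _] := A_right.
apply: within_continuous_pair; last first.
  by apply: continuous_subspaceT; projection_continuity.
apply: within_continuous_pair.
  by apply: continuous_subspaceT; projection_continuity.
apply: within_continuous_pair; last first.
  by apply: continuous_subspaceT; projection_continuity.
apply: (within_continuous_compW (Q := E) (f := fst)
  (g := fun p => actA p.1 p.2)) => //.
  exact/continuous_subspaceT/continuous_fst.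
by move=> _ [q [? _] <-].
Qed.

Variable K : set ((G * (A * B)) * Z).
Hypothesis K_closed : closed K.

Local Notation C := ((D `*` setT) `&` K).

Definition diag_lift : set ((A * G) * (B * (B * Z))) :=
  [set q | E q.1 /\ C (diag_unlift q) /\ q.2.2.1 = actB q.1.2 q.2.1].

Hypothesis B_hausdorff : hausdorff_space B.

Lemma closure_diag_lift q :
  (E `*` setT) q -> closure diag_lift q -> s q.1.2 = rB q.2.1 -> diag_lift q.
Proof.
have [_ _ sA_act _ _] := A_right; have [_ actB_cont _ _ _] := B_left.
move=> Eq clq hb; have [ah _] := Eq.
have lift_E : diag_lift `<=` E `*` setT by move=> ? [].
have K_q : K (diag_unlift q).
  apply: (closure_within_preimage_closed lift_E diag_unlift_continuous) => //.
  by move=> _ [? [_ [[_ ?] _]] <-].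
have lift_P : diag_lift `<=` (E `*` setT) `&` [set q | s q.1.2 = rB q.2.1].
  by move=> ? [? [[[[? sq] _] _] _]]; split; [split | rewrite /= sq].
have c_hb : q.2.2.1 = actB q.1.2 q.2.1.
  apply: (hausdorff_closure_within_eq (f := fun q => q.2.2.1)
    (g := fun q => actB q.1.2 q.2.1) B_hausdorff lift_P) => //.
  - by apply: continuous_subspaceT; projection_continuity.
  - apply: (within_continuous_compW (Q := [set p | s p.1 = rB p.2])
      (f := fun q => (q.1.2, q.2.1)) (g := fun p => actB p.1 p.2)) => //.
      by apply: continuous_subspaceT; projection_continuity.
    by move=> _ [? [_ ?] <-].
  - by move=> ? [_ [_ ->]].
by do 3?split=> //; rewrite /fibre_prod /= sA_act.
Qed.

Hypothesis A_proper : proper_right_action r sA actA.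

Lemma diag_act_image_closed :
  rel_closed ((W `*` W) `*` setT) ((fun p => (theta p.1, p.2)) @` C).
Proof.
have [_ [_ A_closed]] := A_proper; have [_ _ sA_act _ _] := A_right.
pose phi (q : (A * G) * (B * (B * Z))) := ((actA q.1.1 q.1.2, q.1.1), q.2).
have phi_closed : closed (phi @` ((E `*` setT) `&` closure diag_lift)).
  apply: rel_closedTT (A_closed _ _ _).
  by exists (closure diag_lift); split=> //; exact: closed_closure.
pose shuffle (y : ((A * B) * (A * B)) * Z) :=
  ((y.1.2.1, y.1.1.1), (y.1.2.2, (y.1.1.2, y.2))).
have shuffle_cont : continuous shuffle.
  by rewrite /shuffle; projection_continuity.
exists (shuffle @^-1` (phi @` ((E `*` setT) `&` closure diag_lift))).
split; first exact: (proj1 (continuous_closedP _) shuffle_cont).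
apply/seteqP; split.
  move=> _ [[[g [a b]] z] [[[ab ga] _] K_p] <-].
  split; first by split=> //; split=> //; exact: diag_act_fibre_prod.
  exists ((actA a (inv g), g), (b, (actB g b, z))); last first.
    by rewrite /phi /= actAVK.
  split; first by split=> //; exact: sA_actV.
  apply: subset_closure; split; first exact: sA_actV.
  by rewrite /diag_unlift /= actAVK.
move=> [[[x c] [a b]] z] [[[_ ab] _] [[[x' h] [b' [c' z']]] [E_xh cl]]].
rewrite /phi /shuffle /= => -[ax x'x b'b c'c z'z]; subst a x' b' c' z'.
have [xh _] := E_xh.
have hb : s h = rB b by rewrite -(sA_act _ _ xh).
have [_ [C_p /= ->]] := closure_diag_lift E_xh cl hb.
by exists ((h, (actA x h, b)), z); rewrite //= /diag_act /= actAKV.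
Qed.

End DiagonalAction.

Theorem lemma5p2 (G G0 A B : topologicalType)
    (r s : G -> G0) (mul : G -> G -> G) (inv : G -> G) (u : G0 -> G)
    (sA : A -> G0) (actA : A -> G -> A) (rB : B -> G0) (actB : G -> B -> B) :
  etale_groupoid r s mul inv u ->
  right_space r s mul u sA actA ->
  left_space r s mul u rB actB ->
  proper_right_action r sA actA ->
  hausdorff_space B ->
  proper_diag_action s inv sA rB actA actB.
Proof.
move=> groupoid A_right B_left A_proper B_hausdorff.
split; first exact: (diag_act_continuous groupoid A_right B_left).
split.
  move=> _ [[g [a b]] [ab ga] <-]; split=> //.
  exact: (diag_act_fibre_prod groupoid A_right B_left).
move=> Z _ [K [K_closed ->]].
exact: (diag_act_image_closed groupoid A_right B_left K_closed B_hausdorff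
  A_proper).
Qed.
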